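(* Let $q=(q_1,q_2,q_3)\in K^3$. There exists a linear endomorphism $\varphi_q$ of $\mathbf{WQSym}$ such that $\varphi_q\circ L=\Gamma_q$ if, and only if, $q=(1,0,0)$ or $q=(0,1,0)$.
   Context: Let $K$ be a field; convention $0^0=1$. For $n\geq0$, $[n]=\{1,\ldots,n\}$, $\mathbb{T}_n$ is the set of topologies on $[n]$ and $\mathcal{H}_{\mathbb{T}}$ the $K$-vector space with basis $\bigsqcup_n\mathbb{T}_n$. For a topology $\mathcal{T}$ on $[n]$: $i\leq_{\mathcal{T}}j$ iff every open set containing $i$ contains $j$; $i\sim_{\mathcal{T}}j$ iff $i\leq_{\mathcal{T}}j$ and $j\leq_{\mathcal{T}}i$; $i<_{\mathcal{T}}j$ iff $i\leq_{\mathcal{T}}j$ and not $j\leq_{\mathcal{T}}i$. A packed word of length $n$ is a word $f=f(1)\ldots f(n)$ of positive integers with $\{f(1),\ldots,f(n)\}=[\max f]$; $\mathbf{WQSym}$ is the $K$-vector space with basis the packed words. A linear extension of $\mathcal{T}\in\mathbb{T}_n$ is a packed word $f$ of length $n$ with $f(i)=f(j)\Leftrightarrow i\sim_{\mathcal{T}}j$ and $i<_{\mathcal{T}}j\Rightarrow f(i)<f(j)$; $\mathcal{L}(\mathcal{T})$ is their set and $L$ is the linear map $\mathcal{H}_{\mathbb{T}}\to\mathbf{WQSym}$, $L(\mathcal{T})=\sum_{f\in\mathcal{L}(\mathcal{T})}f$. A generalized T-partition of $\mathcal{T}\in\mathbb{T}_n$ is a packed word $f$ of length $n$ with $i\leq_{\mathcal{T}}j\Rightarrow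 f(i)\leq f(j)$; $\mathcal{P}(\mathcal{T})$ is their set. For $f\in\mathcal{P}(\mathcal{T})$: $\ell_1(f)=\sharp\{(i,j)\mid i<_{\mathcal{T}}j,\ i<j,\ f(i)=f(j)\}$; $\ell_2(f)=\sharp\{(i,j)\mid i<_{\mathcal{T}}j,\ i>j,\ f(i)=f(j)\}$; $\ell_3(f)=\sharp\{(i,j,k)\mid i<j<k,\ i\sim_{\mathcal{T}}k,\ \text{not }i\sim_{\mathcal{T}}j,\ \text{not }j\sim_{\mathcal{T}}k,\ f(i)=f(j)=f(k)\}$. $\Gamma_q:\mathcal{H}_{\mathbb{T}}\to\mathbf{WQSym}$ is the linear map $\Gamma_q(\mathcal{T})=\sum_{f\in\mathcal{P}(\mathcal{T})}q_1^{\ell_1(f)}q_2^{\ell_2(f)}q_3^{\ell_3(f)}f$. *)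

From HB Require Import structures.
From mathcomp Require Import all_boot all_order all_algebra.
From mathcomp Require Import finmap.
From mathcomp.multinomials Require Import monalg.
Set Implicit Arguments. Unset Strict Implicit. Unset Printing Implicit Defensive.
Import GRing.Theory.
Local Open Scope ring_scope.

(* A word f = f(1)...f(n) of positive integers is a seq nat; f(i) = nth 0 f (i-1). *)
Definition packed (w : seq nat) : bool :=
  (0 \notin w) && all (fun k => k \in w) (iota 1 (\max_(x <- w) x)).

Definition pword := {w : seq nat | packed w}.

Lemma packed_nil : packed [::]. Proof. by rewrite /packed big_nil. Qed.
Definition pword_nil : pword := exist _ [::] packed_nil.

Definition WQSym (K : fieldType) := {malg K[pword]}.

Definition to_pword (w : seq nat) : pword := insubd pword_nil w.

Definition is_topology n (T : {set {set 'I_n}}) : bool :=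
  [&& set0 \in T, setT \in T,
      [forall U in T, forall V in T, (U :|: V) \in T] &
      [forall U in T, forall V in T, (U :&: V) \in T]].

Definition topology n := {T : {set {set 'I_n}} | is_topology T}.

Section Orders.
Variable n : nat.
Variable T : topology n.
Definition tle (i j : 'I_n) : bool := [forall U in val T, (i \in U) ==> (j \in U)].
Definition tsim (i j : 'I_n) : bool := tle i j && tle j i.
Definition tlt (i j : 'I_n) : bool := tle i j && ~~ tle j i.

Definition wval (f : seq nat) (i : 'I_n) : nat := nth 0 f i.

Definition is_linext (f : seq nat) : bool :=
  [&& size f == n, packed f,
      [forall i, forall j, (wval f i == wval f j) == tsim i j] &
      [forall i, forall j, tlt i j ==> (wval f i < wval f j)%N]].

Definition is_Tpartition (f : seq nat) : bool :=
  [&& size f == n, packed f &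
      [forall i, forall j, tle i j ==> (wval f i <= wval f j)%N]].

Definition ell1 (f : seq nat) : nat :=
  #|[set p : 'I_n * 'I_n | [&& tlt p.1 p.2, (p.1 < p.2)%N & wval f p.1 == wval f p.2]]|.
Definition ell2 (f : seq nat) : nat :=
  #|[set p : 'I_n * 'I_n | [&& tlt p.1 p.2, (p.1 > p.2)%N & wval f p.1 == wval f p.2]]|.
Definition ell3 (f : seq nat) : nat :=
  #|[set t : 'I_n * 'I_n * 'I_n |
      let: (i, j, k) := t in
      [&& (i < j)%N, (j < k)%N, tsim i k, ~~ tsim i j, ~~ tsim j k,
          wval f i == wval f j & wval f j == wval f k]]|.

(* packed words of length n have all letters in [1..n], so they are all
   obtained from n-tuples over 'I_(n.+1) *)
Definition tword (t : n.-tuple 'I_n.+1) : seq nat := map val t.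

Definition Lmap (K : fieldType) : WQSym K :=
  \sum_(t : n.-tuple 'I_n.+1 | is_linext (tword t)) << to_pword (tword t) >>.

Definition Gamma (K : fieldType) (q1 q2 q3 : K) : WQSym K :=
  \sum_(t : n.-tuple 'I_n.+1 | is_Tpartition (tword t))
     << q1 ^+ ell1 (tword t) * q2 ^+ ell2 (tword t) * q3 ^+ ell3 (tword t)
        *g to_pword (tword t) >>.
End Orders.

Definition linear_endo (K : fieldType) (phi : WQSym K -> WQSym K) : Prop :=
  forall (a : K) (x y : WQSym K), phi (a *: x + y) = a *: phi x + phi y.

(* A packed word w is the unique linear extension of the topology T_w of the total
   preorder i <= j <-> w(i) <= w(j), so phi_q is forced on the basis: phi_q(w) = Gamma_q(T_w),
   and phi_q exists iff sum_{g in L(T)} Gamma_q(T_g) = Gamma_q(T) for every topology T.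
   Comparing the coefficients of the constant word 1...1 for the antichain on two points,
   for the poset {1 < 2, 3}, and for the topology in which 1 ~ 3 and 2 is isolated gives
   q1 + q2 = 1, q1^3 + q1^2 q2 + q1 q2^2 = q1 and 2 q1 q2 q3 = q3, whose only solutions
   are (1,0,0) and (0,1,0).
   Conversely, for q = (1,0,0) the coefficient of f in Gamma_q(T_g) is 1 exactly when f is a
   T_g-partition with l2 = l3 = 0.  If f is a T-partition with l2(f) = l3(f) = 0, exactly one
   linear extension g of T has this property (order the classes of T by their f-value,
   breaking ties by their least element), and none has it otherwise.  The case (0,1,0) is
   the mirror image, with the positions read from right to left. *)

From mathcomp Require Import all_boot all_order all_algebra.
From mathcomp Require Import finmap.
From mathcomp.multinomials Require Import monalg.
From mathcomp Require Import ring.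
Set Implicit Arguments. Unset Strict Implicit. Unset Printing Implicit Defensive.
Import GRing.Theory.

Section UpsetTopology.
Variable n : nat.
Implicit Types (R : rel 'I_n) (U : {set 'I_n}) (T : topology n).

Definition upset R U := [forall i, forall j, (i \in U) && R i j ==> (j \in U)].

Lemma upsetP R U : reflect (forall i j, i \in U -> R i j -> j \in U) (upset R U).
Proof.
apply: (iffP forallP) => [H i j iU Rij|H i].
  by have /forallP/(_ j) := H i; rewrite iU Rij.
by apply/forallP => j; apply/implyP => /andP [iU Rij]; exact: H iU Rij.
Qed.

Lemma upsets_topology R : is_topology [set U | upset R U].
Proof.
apply/and4P; split.
- by rewrite inE; apply/upsetP => i j; rewrite inE.
- by rewrite inE; apply/upsetP => i j; rewrite !in_setT.
- apply/forall_inP => U; rewrite inE => /upsetP hU.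
  apply/forall_inP => V; rewrite inE => /upsetP hV.
  rewrite inE; apply/upsetP => i j; rewrite !inE => /orP [iU|iV] Rij.
    by rewrite (hU i j iU Rij).
  by rewrite (hV i j iV Rij) orbT.
- apply/forall_inP => U; rewrite inE => /upsetP hU.
  apply/forall_inP => V; rewrite inE => /upsetP hV.
  rewrite inE; apply/upsetP => i j; rewrite !inE => /andP [iU iV] Rij.
  by rewrite (hU i j iU Rij) (hV i j iV Rij).
Qed.

Definition upset_topology R : topology n := exist _ [set U | upset R U] (upsets_topology R).

Lemma tle_upset_topology R : reflexive R -> transitive R ->
  tle (upset_topology R) =2 R.
Proof.
move=> Rr Rt i j; apply/forall_inP/idP => [H|Rij U]; last first.
  by rewrite inE => /upsetP hU; apply/implyP => iU; exact: hU i j iU Rij.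
have /H : [set k | R i k] \in val (upset_topology R).
  by rewrite inE; apply/upsetP => k l; rewrite !inE; exact: Rt.
by rewrite !inE Rr.
Qed.

Lemma tle_refl T : reflexive (tle T).
Proof. by move=> i; apply/forall_inP => U _; apply/implyP. Qed.

Lemma tle_trans T : transitive (tle T).
Proof.
move=> j i k /forall_inP hij /forall_inP hjk; apply/forall_inP => U UT.
by apply/implyP => /(implyP (hij U UT)) /(implyP (hjk U UT)).
Qed.

End UpsetTopology.

Lemma packedP (w : seq nat) :
  reflect (0 \notin w /\ forall k x, x \in w -> 0 < k <= x -> k \in w) (packed w).
Proof.
apply: (iffP andP) => [[w0 /allP H]|[w0 H]]; split => //.
  move=> k x xw /andP [k0 kx]; apply: H; rewrite mem_iota k0 add1n ltnS.
  exact: leq_trans kx (leq_bigmax_seq x xw _).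
apply/allP => k; rewrite mem_iota add1n ltnS => /andP [k0 kM].
have [/hasP [x xw kx]|/hasP N] := boolP (has (fun x => k <= x) w).
  by apply: H xw _; rewrite k0.
suff : \max_(x <- w) x <= k.-1 by rewrite leqNgt (leq_trans _ kM) // prednK.
apply/bigmax_leqP_seq => x xw _; rewrite -ltnS prednK // ltnNge.
by apply/negP => kx; apply: N; exists x.
Qed.

Section Tuples.
Variable n : nat.
Implicit Types (t : n.-tuple 'I_n.+1).

Lemma wval_tword t (i : 'I_n) : wval (tword t) i = tnth t i.
Proof. by rewrite /wval /tword (nth_map ord0) ?size_tuple // (tnth_nth ord0). Qed.

Lemma size_tword t : size (tword t) = n.
Proof. by rewrite size_map size_tuple. Qed.

Lemma tword_inj : injective (@tword n).
Proof. by move=> t1 t2 /(inj_map val_inj) /val_inj. Qed.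

Lemma mem_tword t x : (x \in tword t) = [exists i, (tnth t i : nat) == x].
Proof.
apply/mapP/existsP => [[y /tnthP [i ->] ->]|[i /eqP <-]]; first by exists i.
by exists (tnth t i) => //; apply/tnthP; exists i.
Qed.

Lemma packed_twordP t : reflect ((forall i, 0 < tnth t i) /\
   forall k i, 0 < k <= tnth t i -> exists j, (tnth t j : nat) = k) (packed (tword t)).
Proof.
apply: (iffP (packedP _)) => [[w0 H]|[w0 H]]; split.
- move=> i; rewrite lt0n; apply: contraNneq w0 => e.
  by rewrite mem_tword; apply/existsP; exists i; rewrite e.
- move=> k i ki; have : k \in tword t.
    by apply: (H k (tnth t i)) => //; rewrite mem_tword; apply/existsP; exists i.
  by rewrite mem_tword => /existsP [j /eqP]; exists j.
- by rewrite mem_tword; apply/existsP => -[i /eqP e]; have := w0 i; rewrite e.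
- move=> k x; rewrite mem_tword => /existsP [i /eqP <-] /(H k i) [j e].
  by rewrite mem_tword; apply/existsP; exists j; apply/eqP.
Qed.

Definition tuple_le t : rel 'I_n := fun i j => tnth t i <= tnth t j.

Lemma tuple_le_refl t : reflexive (tuple_le t). Proof. by move=> i; exact: leqnn. Qed.
Lemma tuple_le_trans t : transitive (tuple_le t). Proof. by move=> j i k; exact: leq_trans. Qed.

End Tuples.

Lemma card_ord_range m k : k <= m -> #|[set v : 'I_m.+1 | 0 < v <= k]| = k.
Proof.
move=> km; have lt_m (x : 'I_k) : x.+1 < m.+1 by rewrite ltnS (leq_trans (ltn_ord x)).
have -> : [set v : 'I_m.+1 | 0 < v <= k] = [set inord x.+1 | x : 'I_k].
  apply/setP => v; rewrite !inE; apply/idP/imsetP => [/andP [v0 vk]|[x _ ->]].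
    have xk : v.-1 < k by rewrite prednK.
    by exists (Ordinal xk) => //; apply: val_inj; rewrite /= inordK ?prednK.
  by rewrite inordK //= ltnS.
rewrite card_imset ?card_ord // => x y /(congr1 val) /=.
by rewrite !inordK // => -[] /val_inj.
Qed.

Section Rank.
Variable n : nat.
Variable P : rel 'I_n.
Hypotheses (Pr : reflexive P) (Pt : transitive P) (Ptot : total P).

Definition class_rep (j : 'I_n) := [forall j' : 'I_n, (j' < j) ==> ~~ (P j' j && P j j')].

Definition rank (i : 'I_n) := #|[set j | class_rep j & P j i]|.

Lemma class_rep_exists j : exists r, [/\ class_rep r, P r j & P j r].
Proof.
have Pjj : P j j && P j j by rewrite Pr.
case: (@arg_minnP _ j (fun r => P r j && P j r) (@nat_of_ord n) Pjj) => r /andP [Prj Pjr] rmin.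
exists r; split => //; apply/forall_inP => j' jr.
apply/negP => /andP [Pjr' Prj']; have := rmin j'.
by rewrite (Pt Pjr' Prj) (Pt Pjr Prj') leqNgt jr => /(_ isT).
Qed.

Lemma class_rep_inj r1 r2 : class_rep r1 -> class_rep r2 -> P r1 r2 -> P r2 r1 -> r1 = r2.
Proof.
move=> /forallP h1 /forallP h2 P12 P21; apply: val_inj.
case: (ltngtP r1 r2) => // lt.
  by have := h2 r1; rewrite lt P12 P21.
by have := h1 r2; rewrite lt P12 P21.
Qed.

Lemma rank_leE i j : (rank i <= rank j) = P i j.
Proof.
apply/idP/idP => [|Pij]; last first.
  apply: subset_leq_card; apply/subsetP => r; rewrite !inE.
  by case/andP => -> Pri; exact: Pt Pri Pij.
apply: contraLR => nPij; rewrite -ltnNge.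
have [r [rr Pri Pir]] := class_rep_exists i.
have Pji : P j i by case/orP: (Ptot i j) => // Pij; rewrite Pij in nPij.
apply: proper_card; rewrite properE; apply/andP; split.
  by apply/subsetP => x; rewrite !inE => /andP [-> Pxj]; exact: Pt Pxj Pji.
apply/subsetPn; exists r; rewrite !inE rr ?Pri //=.
by apply: contra nPij => Prj; exact: Pt Pir Prj.
Qed.

Lemma rank_eqE i j : (rank i == rank j) = P i j && P j i.
Proof. by rewrite eqn_leq !rank_leE. Qed.

Lemma rank_gt0 i : 0 < rank i.
Proof.
rewrite card_gt0; apply/set0Pn; have [r [rr Pri _]] := class_rep_exists i.
by exists r; rewrite inE rr Pri.
Qed.

Lemma rank_le_n i : rank i <= n.
Proof. by rewrite -[n]card_ord max_card. Qed.

Lemma rank_onto k i : 0 < k <= rank i -> exists j, rank j = k.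
Proof.
move=> kk; set A := [set j | class_rep j & P j i].
pose h r : 'I_n.+1 := inord (rank r).
have hE r : (h r : nat) = rank r by rewrite inordK // ltnS rank_le_n.
have hinj : {in A &, injective h}.
  move=> r1 r2; rewrite /A !inE => /andP [r1r _] /andP [r2r _] /(congr1 (@nat_of_ord _)).
  by rewrite !hE => /eqP; rewrite rank_eqE => /andP []; exact: class_rep_inj.
have sub : h @: A \subset [set v : 'I_n.+1 | 0 < v <= rank i].
  apply/subsetP => v /imsetP [r]; rewrite /A inE => /andP [_ Pri] ->.
  by rewrite inE hE rank_gt0 rank_leE.
have eqA : h @: A =i [set v : 'I_n.+1 | 0 < v <= rank i].
  by apply/subset_cardP => //; rewrite card_in_imset // card_ord_range ?rank_le_n.
have kn : k < n.+1 by rewrite ltnS (leq_trans _ (rank_le_n i)) //; case/andP: kk.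
have : (inord k : 'I_n.+1) \in [set v : 'I_n.+1 | 0 < v <= rank i] by rewrite inE inordK.
rewrite -eqA => /imsetP [r _ e]; exists r.
by move/(congr1 (@nat_of_ord _)): e; rewrite hE /= inordK.
Qed.

End Rank.

Section RankTuple.
Variable n : nat.
Implicit Types (t : n.-tuple 'I_n.+1) (P : rel 'I_n).

Lemma eq_rank P1 P2 : P1 =2 P2 -> rank P1 =1 rank P2.
Proof.
move=> H i; apply: eq_card => j; rewrite !inE H; congr (_ && _).
by apply: eq_forallb => j'; rewrite !H.
Qed.

Lemma packed_rank t : packed (tword t) -> forall i, (tnth t i : nat) = rank (tuple_le t) i.
Proof.
case/packed_twordP => t0 tonto i.
set A := [set j | class_rep (tuple_le t) j & tuple_le t j i].
have hinj : {in A &, injective (tnth t)}.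
  move=> r1 r2; rewrite !inE => /andP [r1r _] /andP [r2r _] e.
  by apply: (class_rep_inj r1r r2r); rewrite /tuple_le e.
have imA : tnth t @: A = [set v : 'I_n.+1 | 0 < v <= tnth t i].
  apply/setP => v; rewrite inE; apply/imsetP/idP => [[r]|/andP [v0 vi]].
    by rewrite inE => /andP [_ Pri] ->; rewrite t0.
  have [j tj] := tonto v i (introT andP (conj v0 vi)).
  have [r [rr Prj Pjr]] := class_rep_exists (@tuple_le_refl n t) (@tuple_le_trans n t) j.
  have trj : tnth t r = tnth t j by apply/val_inj/eqP; rewrite eqn_leq; exact/andP.
  exists r; first by rewrite inE rr /tuple_le trj tj.
  by apply: val_inj; rewrite trj.
by rewrite /rank -/A -(card_in_imset hinj) imA card_ord_range // -ltnS.
Qed.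

Definition rank_tuple P : n.-tuple 'I_n.+1 := [tuple inord (rank P i) | i < n].

Lemma tnth_rank_tuple P i : (tnth (rank_tuple P) i : nat) = rank P i.
Proof. by rewrite tnth_mktuple inordK // ltnS rank_le_n. Qed.

Lemma packed_rank_tuple P : reflexive P -> transitive P -> total P ->
  packed (tword (rank_tuple P)).
Proof.
move=> Pr Pt Ptot; apply/packed_twordP; split => [i|k i].
  by rewrite tnth_rank_tuple rank_gt0.
rewrite tnth_rank_tuple => /(rank_onto Pr Pt Ptot) [j rj].
by exists j; rewrite tnth_rank_tuple.
Qed.

End RankTuple.

Section CanonicalExtension.
Variable n : nat.
Variable R : rel 'I_n.
Hypotheses (Rr : reflexive R) (Rt : transitive R).
Variable key : 'I_n -> nat.
Hypothesis key_inj : injective key.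
Variable f : 'I_n -> nat.
Implicit Types (Q : rel 'I_n) (g : n.-tuple 'I_n.+1).

Definition req i j := R i j && R j i.

Lemma req_sym i j : req i j = req j i. Proof. by rewrite /req andbC. Qed.
Lemma req_refl i : req i i. Proof. by rewrite /req Rr. Qed.
Lemma req_trans j i k : req i j -> req j k -> req i k.
Proof. by case/andP => a b /andP [c d]; rewrite /req (Rt a c) (Rt d b). Qed.

(* For [key = val], [no_inversion] and [no_interleaving] express l2 = 0 and l3 = 0; for the
   reversed key they express l1 = 0 and l3 = 0. *)
Definition f_partition Q := [forall i, forall j, Q i j ==> (f i <= f j)].

Definition no_inversion Q :=
  [forall i, forall j, [&& Q i j, ~~ Q j i & key j < key i] ==> (f i != f j)].

Definition no_interleaving Q := [forall i, forall j, forall k,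
  ~~ [&& key i < key j, key j < key k, Q i k && Q k i, ~~ (Q i j && Q j i),
        ~~ (Q j k && Q k j), f i == f j & f j == f k]].

Lemma f_partitionP Q : reflect (forall i j, Q i j -> f i <= f j) (f_partition Q).
Proof.
apply: (iffP forallP) => [H i j Qij|H i].
  by have /forallP/(_ j) := H i; rewrite Qij.
by apply/forallP => j; apply/implyP; exact: H.
Qed.

Lemma no_inversionP Q :
  reflect (forall i j, Q i j -> ~~ Q j i -> key j < key i -> f i != f j) (no_inversion Q).
Proof.
apply: (iffP forallP) => [H i j Qij nQji kji|H i].
  by have /forallP/(_ j) := H i; rewrite Qij nQji kji.
by apply/forallP => j; apply/implyP => /and3P [a b c]; exact: H.
Qed.

Lemma no_interleavingP Q : reflect (forall i j k, key i < key j -> key j < key k ->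
   Q i k && Q k i -> ~~ (Q i j && Q j i) -> ~~ (Q j k && Q k j) ->
   f i == f j -> f j == f k -> False) (no_interleaving Q).
Proof.
apply: (iffP forallP) => [H i j k a b c d e g h|H i].
  by have /forallP/(_ j)/forallP/(_ k) := H i; rewrite a b c d e g h.
apply/forallP => j; apply/forallP => k.
by apply/negP => /and5P [a b c d /and3P [e g h]]; exact: H a b c d e g h.
Qed.

Lemma eq_f_partition Q1 Q2 : Q1 =2 Q2 -> f_partition Q1 = f_partition Q2.
Proof. by move=> H; do 2!apply: eq_forallb => ?; rewrite H. Qed.

Lemma eq_no_inversion Q1 Q2 : Q1 =2 Q2 -> no_inversion Q1 = no_inversion Q2.
Proof. by move=> H; do 2!apply: eq_forallb => ?; rewrite !H. Qed.

Lemma eq_no_interleaving Q1 Q2 : Q1 =2 Q2 -> no_interleaving Q1 = no_interleaving Q2.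
Proof. by move=> H; do 3!apply: eq_forallb => ?; rewrite !H. Qed.

Definition good_extension g :=
  [&& packed (tword g),
      [forall i, forall j, ((tnth g i : nat) == tnth g j) == req i j],
      [forall i, forall j, (R i j && ~~ R j i) ==> (tnth g i < tnth g j)],
      f_partition (tuple_le g), no_inversion (tuple_le g)
    & no_interleaving (tuple_le g)].

Lemma good_extensionP g : good_extension g -> [/\ packed (tword g),
   forall i j, ((tnth g i : nat) == tnth g j) = req i j,
   forall i j, R i j -> ~~ R j i -> tnth g i < tnth g j,
   forall i j, tuple_le g i j -> f i <= f j &
   no_inversion (tuple_le g) && no_interleaving (tuple_le g)].
Proof.
case/and3P => pg /forallP geq /and4P [/forallP glt /f_partitionP gf gi gl].
split=> // [i j|i j Rij nRji|]; last by rewrite gi gl.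
  by have /forallP/(_ j)/eqP := geq i.
by have /forallP/(_ j) := glt i; rewrite Rij nRji.
Qed.

Definition class_min i := [arg min_(j < i | req i j) key j].

Lemma class_minP i : req i (class_min i) /\ forall j, req i j -> key (class_min i) <= key j.
Proof. by rewrite /class_min; case: arg_minnP => [|a ha hmin]; [exact: req_refl|]. Qed.

Lemma class_min_eq i j : req i j -> class_min i = class_min j.
Proof.
move=> rij; have [ri hi] := class_minP i; have [rj hj] := class_minP j.
apply: key_inj; apply/eqP; rewrite eqn_leq hi ?hj //.
  by apply: req_trans ri; rewrite req_sym.
exact: req_trans rij rj.
Qed.

Lemma key_class_min_eqE i j : (key (class_min i) == key (class_min j)) = req i j.
Proof.
rewrite (inj_eq key_inj); apply/eqP/idP => [e|]; last exact: class_min_eq.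
have [ri _] := class_minP i; have [rj _] := class_minP j; rewrite e in ri.
by apply: req_trans ri _; rewrite req_sym.
Qed.

Definition canonical_le i j :=
  (f i < f j) || (f i == f j) && (key (class_min i) <= key (class_min j)).

Lemma canonical_le_f i j : canonical_le i j -> f i <= f j.
Proof. by case/orP => [/ltnW //|/andP [/eqP -> _]]. Qed.

Lemma canonical_le_refl : reflexive canonical_le.
Proof. by move=> i; rewrite /canonical_le eqxx leqnn orbT. Qed.

Lemma canonical_le_total : total canonical_le.
Proof.
move=> i j; rewrite /canonical_le.
by case: (ltngtP (f i) (f j)) => //= _; exact: leq_total.
Qed.

Lemma canonical_le_trans : transitive canonical_le.
Proof.
move=> j i k Hij Hjk; have fij := canonical_le_f Hij; have fjk := canonical_le_f Hjk.
have [fik|fki] := ltnP (f i) (f k); first by rewrite /canonical_le fik.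
have eij : f i = f j by apply/eqP; rewrite eqn_leq fij (leq_trans fjk fki).
have ejk : f j = f k by apply/eqP; rewrite eqn_leq fjk -eij fki.
move: Hij Hjk; rewrite /canonical_le eij ejk ltnn eqxx /=; exact: leq_trans.
Qed.

Lemma f_partition_req : f_partition R -> forall i j, req i j -> f i = f j.
Proof. by move=> /f_partitionP hf i j /andP [Rij Rji]; apply/eqP; rewrite eqn_leq !hf. Qed.

Lemma canonical_le_reqE : f_partition R -> forall i j,
  canonical_le i j && canonical_le j i = req i j.
Proof.
move=> hf i j; rewrite /canonical_le.
case: (ltngtP (f i) (f j)) => [fij|fji|fij] /=; last by rewrite -eqn_leq key_class_min_eqE.
- by apply/esym/negP => /(f_partition_req hf) e; rewrite e ltnn in fij.
- by apply/esym/negP => /(f_partition_req hf) e; rewrite e ltnn in fji.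
Qed.

Section Good.
Variable g : n.-tuple 'I_n.+1.
Hypothesis good_g : good_extension g.

Lemma good_f_eq i j : (tnth g i : nat) = tnth g j -> f i = f j.
Proof.
case/good_extensionP: good_g => _ _ _ gf _ e.
by apply/eqP; rewrite eqn_leq !gf // /tuple_le e.
Qed.

Lemma good_lt_of_f_lt i j : f i < f j -> tnth g i < tnth g j.
Proof.
case/good_extensionP: good_g => _ _ _ gf _; apply: contraTT.
by rewrite -!leqNgt; exact: gf.
Qed.

Lemma good_key_lt i j : tnth g i < tnth g j -> f i = f j -> key i < key j.
Proof.
case/good_extensionP: good_g => _ _ _ _ /andP [/no_inversionP gi _] gij fij.
rewrite ltnNge; apply: contraL (eqxx (f i)) => kji; rewrite {2}fij.
have neq : key j != key i by rewrite (inj_eq key_inj); apply: contraTneq gij => ->; rewrite ltnn.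
apply: gi; first exact: ltnW gij.
  by rewrite /tuple_le -ltnNge.
by rewrite ltn_neqAle neq kji.
Qed.

Lemma good_tuple_leE : tuple_le g =2 canonical_le.
Proof.
case/good_extensionP: good_g => _ geq _ _ _ i j.
rewrite /tuple_le /canonical_le.
case: (ltngtP (f i) (f j)) => [fij|fji|fij] /=.
- exact/ltnW/good_lt_of_f_lt.
- by rewrite leqNgt good_lt_of_f_lt.
have [ri _] := class_minP i; have [rj _] := class_minP j.
have gi : (tnth g i : nat) = tnth g (class_min i) by apply/eqP; rewrite geq.
have gj : (tnth g j : nat) = tnth g (class_min j) by apply/eqP; rewrite geq.
have fm : f (class_min i) = f (class_min j) by rewrite -(good_f_eq gi) -(good_f_eq gj).
rewrite gi gj; have [rij|nrij] := boolP (req i j).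
  by rewrite (class_min_eq rij) !leqnn.
have : (tnth g (class_min i) : nat) != tnth g (class_min j) by rewrite -gi -gj geq.
case: ltngtP => // [lt|gt] _.
  by rewrite (ltnW (good_key_lt lt fm)).
by rewrite leqNgt (good_key_lt gt (esym fm)).
Qed.

Lemma good_tuple_reqE i j : tuple_le g i j && tuple_le g j i = req i j.
Proof. by case/good_extensionP: good_g => _ geq _ _ _; rewrite /tuple_le -eqn_leq geq. Qed.

Lemma good_partition_conditions :
  [&& f_partition R, no_inversion R & no_interleaving R].
Proof.
case/good_extensionP: good_g => _ geq glt gf /andP [/no_inversionP gi /no_interleavingP gl].
have gstrict i j : R i j -> ~~ R j i -> tuple_le g i j && ~~ tuple_le g j i.
  by move=> Rij nRji; rewrite /tuple_le -ltnNge ltnW ?glt.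
apply/and3P; split.
- apply/f_partitionP => i j Rij; apply: gf.
  have [Rji|nRji] := boolP (R j i); last by case/andP: (gstrict _ _ Rij nRji).
  by rewrite /tuple_le leq_eqVlt geq /req Rij Rji.
- apply/no_inversionP => i j Rij nRji; case/andP: (gstrict _ _ Rij nRji).
  exact: gi.
- apply/no_interleavingP => i j k a b c d e h1 h2.
  by apply: (gl i j k a b) h1 h2; rewrite good_tuple_reqE.
Qed.

End Good.

Section Canonical.
Hypotheses (fR : f_partition R) (invR : no_inversion R) (intR : no_interleaving R).

Lemma canonical_lt i j : R i j -> ~~ R j i -> ~~ canonical_le j i.
Proof.
move=> Rij nRji; have fij : f i <= f j by move/f_partitionP: fR; apply.
rewrite /canonical_le negb_or -leqNgt fij /= negb_and.
have [fji|] := eqVneq (f j) (f i); last by [].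
have [ri _] := class_minP i; have [rj _] := class_minP j.
case/andP: (ri) => _ Rmi; case/andP: (rj) => Rmj _.
have Rm : R (class_min i) (class_min j) := Rt (Rt Rmi Rij) Rmj.
have nRm : ~~ R (class_min j) (class_min i).
  by apply: contra nRji => Rm'; exact: Rt (Rt Rmj Rm') Rmi.
rewrite -ltnNge ltn_neqAle key_class_min_eqE /req Rij (negbTE nRji) /= leqNgt.
apply: contraL (eqxx (f (class_min i))) => kji.
have := no_inversionP _ invR _ _ Rm nRm kji.
by rewrite -(f_partition_req fR ri) -(f_partition_req fR rj) fji.
Qed.

Lemma canonical_no_inversion : no_inversion canonical_le.
Proof.
apply/no_inversionP => i j Kij nKji kji; apply/negP => /eqP fij.
move: Kij nKji; rewrite /canonical_le fij ltnn eqxx /= -ltnNge => _ kmm.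
have [ri _] := class_minP i; have [rj mj] := class_minP j.
have kmj : key (class_min j) <= key j by apply: mj; exact: req_refl.
have nrij : ~~ req i j by rewrite -key_class_min_eqE neq_ltn kmm.
apply: (no_interleavingP _ intR (class_min i) (class_min j) i kmm (leq_ltn_trans kmj kji)).
- by rewrite -/(req (class_min i) i) req_sym.
- apply: contra nrij; rewrite -/(req _ _) => rm.
  by apply: req_trans (req_trans ri rm) _; rewrite req_sym.
- apply: contra nrij; rewrite -/(req _ _) => rm.
  by apply: (req_trans (j := class_min j)); rewrite // req_sym.
- by rewrite -(f_partition_req fR ri) -(f_partition_req fR rj) fij.
- by rewrite -(f_partition_req fR rj) fij.
Qed.

Lemma good_canonical : good_extension (rank_tuple canonical_le).
Proof.
set g := rank_tuple canonical_le.
have Gle : tuple_le g =2 canonical_le.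
  move=> i j; rewrite /tuple_le !tnth_rank_tuple.
  exact: rank_leE canonical_le_refl canonical_le_trans canonical_le_total i j.
have Greq i j : tuple_le g i j && tuple_le g j i = req i j.
  by rewrite !Gle canonical_le_reqE.
apply/and3P; split.
- exact: packed_rank_tuple canonical_le_refl canonical_le_trans canonical_le_total.
- by apply/forallP => i; apply/forallP => j; rewrite eqn_leq -!/(tuple_le _ _ _) Greq.
apply/and4P; split.
- apply/forallP => i; apply/forallP => j; apply/implyP => /andP [Rij nRji].
  by rewrite ltnNge -/(tuple_le _ j i) Gle canonical_lt.
- by rewrite (eq_f_partition Gle); apply/f_partitionP => i j; exact: canonical_le_f.
- by rewrite (eq_no_inversion Gle); exact: canonical_no_inversion.
- by apply/no_interleavingP => i j k a b; rewrite !Greq; exact: (no_interleavingP _ intR).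
Qed.

End Canonical.

Lemma good_extension_unique g : good_extension g -> g = rank_tuple canonical_le.
Proof.
move=> gg; apply: eq_from_tnth => i; apply: val_inj => /=.
rewrite tnth_rank_tuple (packed_rank _ i); last by case/good_extensionP: gg.
exact: (eq_rank (good_tuple_leE gg) i).
Qed.

Lemma card_good_extensions :
  #|[pred g | good_extension g]| = [&& f_partition R, no_inversion R & no_interleaving R].
Proof.
have [H|H] := boolP [&& f_partition R, no_inversion R & no_interleaving R].
  case/and3P: H => fR invR intR; apply: (@eq_card1 _ (rank_tuple canonical_le)) => g.
  by rewrite !inE; apply/idP/eqP => [/good_extension_unique //|->]; exact: good_canonical.
apply: eq_card0 => g; rewrite !inE; apply/negP => /good_partition_conditions.
by rewrite (negbTE H).
Qed.

End CanonicalExtension.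

Section TopologyTranslation.
Variable n : nat.
Implicit Types (T : topology n) (t g : n.-tuple 'I_n.+1).

Definition letter t (i : 'I_n) : nat := tnth t i.

Definition rev_key (i : 'I_n) := n - i.

Lemma rev_key_inj : injective rev_key.
Proof.
move=> i j /(congr1 (subn n)); rewrite !subKn; first exact: val_inj.
all: exact: ltnW.
Qed.

Lemma rev_key_ltE i j : (rev_key i < rev_key j) = (j < i).
Proof. by rewrite /rev_key ltn_sub2lE // ltnW. Qed.

Lemma linext_twordE T g : is_linext T (tword g) =
  [&& packed (tword g),
      [forall i, forall j, ((tnth g i : nat) == tnth g j) == (tle T i j && tle T j i)] &
      [forall i, forall j, (tle T i j && ~~ tle T j i) ==> (tnth g i < tnth g j)]].
Proof.
rewrite /is_linext size_tword eqxx /=.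
by congr [&& _, _ & _]; do 2!apply: eq_forallb => ?; rewrite !wval_tword.
Qed.

Lemma Tpartition_twordE T t :
  is_Tpartition T (tword t) = packed (tword t) && f_partition (letter t) (tle T).
Proof.
rewrite /is_Tpartition size_tword eqxx /=; congr (_ && _).
by do 2!apply: eq_forallb => ?; rewrite !wval_tword.
Qed.

Lemma cards_eq0_forall (A : finType) (P : pred A) :
  (#|[set x | P x]| == 0) = [forall x, ~~ P x].
Proof.
rewrite cards_eq0; apply/eqP/forallP => [H x|H]; last first.
  by apply/setP => x; rewrite !inE (negbTE (H x)).
by apply/negP => Px; have := in_set0 x; rewrite -H inE Px.
Qed.

Lemma ell2_eq0 T t : (ell2 T (tword t) == 0) = no_inversion (@nat_of_ord n) (letter t) (tle T).
Proof.
rewrite cards_eq0_forall; apply/forallP/no_inversionP => [H i j Qij nQji kji|H [i j]].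
  by have := H (i, j); rewrite /= /tlt Qij nQji kji !wval_tword.
rewrite /= /tlt !wval_tword; apply/negP => /and3P [/andP [Qij nQji] kji e].
by move: (H i j Qij nQji kji); rewrite e.
Qed.

Lemma ell1_eq0 T t : (ell1 T (tword t) == 0) = no_inversion rev_key (letter t) (tle T).
Proof.
rewrite cards_eq0_forall; apply/forallP/no_inversionP => [H i j Qij nQji kji|H [i j]].
  by have := H (i, j); rewrite /= /tlt Qij nQji -rev_key_ltE kji !wval_tword.
rewrite /= /tlt !wval_tword; apply/negP => /and3P [/andP [Qij nQji] kji e].
by move: (H i j Qij nQji); rewrite rev_key_ltE => /(_ kji); rewrite e.
Qed.

Lemma ell3_eq0 T t : (ell3 T (tword t) == 0) = no_interleaving (@nat_of_ord n) (letter t) (tle T).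
Proof.
rewrite cards_eq0_forall; apply/forallP/forallP => [H i|H [[i j] k]].
  apply/forallP => j; apply/forallP => k.
  by have := H (i, j, k); rewrite /= !wval_tword.
by have /forallP/(_ k) := forallP (H i) j; rewrite /= !wval_tword.
Qed.

Lemma no_interleaving_rev (f : 'I_n -> nat) (Q : rel 'I_n) :
  no_interleaving (@nat_of_ord n) f Q = no_interleaving rev_key f Q.
Proof.
have flip (k1 k2 : 'I_n -> nat) : (forall i j, (k1 i < k1 j) = (k2 j < k2 i)) ->
    no_interleaving k1 f Q -> no_interleaving k2 f Q.
  move=> hk /no_interleavingP H; apply/no_interleavingP => i j k a b c d e h1 h2.
  by apply: (H k j i); rewrite ?hk 1?andbC 1?eq_sym.
by apply/idP/idP; apply: flip => i j; rewrite rev_key_ltE.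
Qed.

Lemma ell3_eq0_rev T t : (ell3 T (tword t) == 0) = no_interleaving rev_key (letter t) (tle T).
Proof. by rewrite ell3_eq0 no_interleaving_rev. Qed.

End TopologyTranslation.

Definition word_topology m (w : seq nat) : topology m :=
  upset_topology (fun i j : 'I_m => nth 0 w i <= nth 0 w j).

Lemma tle_word_topology m w : tle (word_topology m w) =2 (fun i j => nth 0 w i <= nth 0 w j).
Proof. by apply: tle_upset_topology => [i|j i k]; [exact: leqnn|exact: leq_trans]. Qed.

Lemma tle_word_topology_tword n (g : n.-tuple 'I_n.+1) :
  tle (word_topology n (tword g)) =2 tuple_le g.
Proof. by move=> i j; rewrite tle_word_topology -!/(wval _ _) !wval_tword. Qed.

Lemma sum_nat_of_bool (I : finType) (A B : pred I) :
  \sum_(i | A i) (B i : nat) = #|[pred i | A i && B i]|.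
Proof.
rewrite -sum1_card [RHS]big_mkcond [LHS]big_mkcond /=.
by apply: eq_bigr => i _; rewrite !inE; case: (A i); case: (B i).
Qed.

Section CountLinearExtensions.
Variables (n : nat) (key : 'I_n -> nat).
Hypothesis key_inj : injective key.
Variable ell : topology n -> seq nat -> nat.
Hypothesis ell_eq0 : forall T t,
  (ell T (tword t) == 0) = no_inversion key (letter t) (tle T).
Hypothesis ell3_eq0_key : forall T t,
  (ell3 T (tword t) == 0) = no_interleaving key (letter t) (tle T).

Definition flat_partition T (w : seq nat) :=
  [&& is_Tpartition T w, ell T w == 0 & ell3 T w == 0].

Lemma sum_flat_partition_linext (T : topology n) (t : n.-tuple 'I_n.+1) :
  \sum_(g : n.-tuple 'I_n.+1 | is_linext T (tword g))
     (flat_partition (word_topology n (tword g)) (tword t) : nat)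
  = flat_partition T (tword t).
Proof.
rewrite sum_nat_of_bool.
rewrite (eq_card (B := [pred g | packed (tword t) &&
           good_extension (tle T) key (letter t) g])); last first.
  move=> g; rewrite !inE linext_twordE /flat_partition Tpartition_twordE ell_eq0 ell3_eq0_key.
  rewrite (eq_f_partition _ (tle_word_topology_tword g)).
  rewrite (eq_no_inversion _ _ (tle_word_topology_tword g)).
  rewrite (eq_no_interleaving _ _ (tle_word_topology_tword g)) /good_extension.
  by case: (packed (tword t)); rewrite /= ?andbF // -!andbA.
rewrite /flat_partition Tpartition_twordE ell_eq0 ell3_eq0_key.
case: (packed (tword t)) => /=; last by rewrite (eq_card0 (A := pred0)).
apply: card_good_extensions => //; [exact: tle_refl | exact: tle_trans].
Qed.

End CountLinearExtensions.

Lemma card_uniq_count (T : finType) (s : seq T) (P : pred T) :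
  uniq s -> (forall x, x \in s) -> #|[set x | P x]| = count P s.
Proof.
move=> us hs; rewrite -size_filter -(card_uniqP (filter_uniq P us)).
by apply: eq_card => x; rewrite inE mem_filter hs andbT.
Qed.

Definition ord_pairs n := [seq (i, j) | i <- ord_enum n, j <- ord_enum n].
Definition ord_triples n := [seq (x, k) | x <- ord_pairs n, k <- ord_enum n].

Lemma ord_pairs_uniq n : uniq (ord_pairs n).
Proof. by apply: allpairs_uniq; rewrite ?ord_enum_uniq // => -[a b] [c d]. Qed.
Lemma mem_ord_pairs n x : x \in ord_pairs n.
Proof. by case: x => i j; apply: allpairs_f; apply: mem_ord_enum. Qed.
Lemma ord_triples_uniq n : uniq (ord_triples n).
Proof. by apply: allpairs_uniq; rewrite ?ord_enum_uniq ?ord_pairs_uniq // => -[a b] [c d]. Qed.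
Lemma mem_ord_triples n x : x \in ord_triples n.
Proof. by case: x => p k; apply: allpairs_f; [exact: mem_ord_pairs|exact: mem_ord_enum]. Qed.

Definition nat_pairs n := [seq (i, j) | i <- iota 0 n, j <- iota 0 n].
Definition nat_triples n := [seq (x, k) | x <- nat_pairs n, k <- iota 0 n].

Lemma nat_pairsE n :
  nat_pairs n = [seq (val x.1, val x.2) | x : 'I_n * 'I_n <- ord_pairs n].
Proof. by rewrite /nat_pairs map_allpairs -val_ord_enum allpairs_mapl allpairs_mapr. Qed.

Lemma nat_triplesE n : nat_triples n =
  [seq (val x.1.1, val x.1.2, val x.2) | x : 'I_n * 'I_n * 'I_n <- ord_triples n].
Proof.
rewrite /nat_triples /ord_triples nat_pairsE map_allpairs -val_ord_enum.
by rewrite allpairs_mapl allpairs_mapr.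
Qed.

Definition count_pairs n (q : nat -> nat -> bool) := count (fun x => q x.1 x.2) (nat_pairs n).
Definition count_triples n (q : nat -> nat -> nat -> bool) :=
  count (fun x => q x.1.1 x.1.2 x.2) (nat_triples n).
Definition all_pairs n (q : nat -> nat -> bool) :=
  all (fun i => all (fun j => q i j) (iota 0 n)) (iota 0 n).

Lemma card_pairs n (p : pred ('I_n * 'I_n)) (q : nat -> nat -> bool) :
  (forall i j, p (i, j) = q i j) -> #|[set x | p x]| = count_pairs n q.
Proof.
move=> pq; rewrite (card_uniq_count _ (@ord_pairs_uniq n) (@mem_ord_pairs n)).
by rewrite /count_pairs nat_pairsE count_map; apply: eq_count => -[i j]; rewrite /= pq.
Qed.

Lemma card_triples n (p : pred ('I_n * 'I_n * 'I_n)) (q : nat -> nat -> nat -> bool) :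
  (forall i j k, p (i, j, k) = q i j k) -> #|[set x | p x]| = count_triples n q.
Proof.
move=> pq; rewrite (card_uniq_count _ (@ord_triples_uniq n) (@mem_ord_triples n)).
by rewrite /count_triples nat_triplesE count_map; apply: eq_count => -[[i j] k]; rewrite /= pq.
Qed.

Lemma forall_pairs n (p : 'I_n -> 'I_n -> bool) (q : nat -> nat -> bool) :
  (forall i j, p i j = q i j) -> [forall i, forall j, p i j] = all_pairs n q.
Proof.
move=> pq; rewrite /all_pairs -val_ord_enum all_map.
apply/forallP/allP => [h i _|h i] /=.
  rewrite all_map; apply/allP => j _; rewrite /= -pq; exact: (forallP (h i) j).
have := h i (mem_ord_enum i); rewrite /= all_map => /allP hi.
by apply/forallP => j; rewrite pq; exact: (hi j (mem_ord_enum j)).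
Qed.

(* Computable counterparts of [packed], [is_linext], [is_Tpartition] and [ell1]-[ell3]: finset
   cardinals and big operators are locked, so concrete instances are evaluated through these. *)
Definition cpacked (w : seq nat) :=
  (0 \notin w) && all (fun k => k \in w) (iota 1 (foldr maxn 0 w)).

Lemma packed_cpacked w : packed w = cpacked w.
Proof.
rewrite /packed /cpacked; congr (_ && all _ (iota 1 _)).
by elim: w => [|a w IH]; rewrite ?big_nil ?big_cons //= IH.
Qed.

Section ComputableStatistics.
Variables (n : nat) (T : topology n) (Rn : nat -> nat -> bool).
Hypothesis tleE : forall i j : 'I_n, tle T i j = Rn i j.

Definition clinext (w : seq nat) := [&& size w == n, cpacked w,
  all_pairs n (fun i j => (nth 0 w i == nth 0 w j) == (Rn i j && Rn j i)) &
  all_pairs n (fun i j => (Rn i j && ~~ Rn j i) ==> (nth 0 w i < nth 0 w j))].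

Lemma linext_clinext w : is_linext T w = clinext w.
Proof.
rewrite /is_linext /clinext packed_cpacked.
rewrite (@forall_pairs n _ (fun i j => (nth 0 w i == nth 0 w j) == (Rn i j && Rn j i))).
  rewrite (@forall_pairs n _ (fun i j => (Rn i j && ~~ Rn j i) ==> (nth 0 w i < nth 0 w j))) //.
  by move=> i j; rewrite /tlt !tleE.
by move=> i j; rewrite /tsim !tleE.
Qed.

Definition ctpartition (w : seq nat) := [&& size w == n, cpacked w &
  all_pairs n (fun i j => Rn i j ==> (nth 0 w i <= nth 0 w j))].

Definition cell1 (w : seq nat) := count_pairs n (fun i j =>
  [&& Rn i j && ~~ Rn j i, i < j & nth 0 w i == nth 0 w j]).
Definition cell2 (w : seq nat) := count_pairs n (fun i j =>
  [&& Rn i j && ~~ Rn j i, i > j & nth 0 w i == nth 0 w j]).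
Definition cell3 (w : seq nat) := count_triples n (fun i j k =>
  [&& i < j, j < k, Rn i k && Rn k i, ~~ (Rn i j && Rn j i), ~~ (Rn j k && Rn k j),
      nth 0 w i == nth 0 w j & nth 0 w j == nth 0 w k]).

Definition cstat (w : seq nat) : option (nat * nat * nat) :=
  if ctpartition w then Some (cell1 w, cell2 w, cell3 w) else None.

Lemma Tpartition_ctpartition w : is_Tpartition T w = ctpartition w.
Proof.
rewrite /is_Tpartition /ctpartition packed_cpacked.
rewrite (@forall_pairs n _ (fun i j => Rn i j ==> (nth 0 w i <= nth 0 w j))) //.
by move=> i j; rewrite tleE.
Qed.

Lemma ell1_cell1 w : ell1 T w = cell1 w.
Proof. by apply: card_pairs => i j; rewrite /tlt !tleE. Qed.
Lemma ell2_cell2 w : ell2 T w = cell2 w.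
Proof. by apply: card_pairs => i j; rewrite /tlt !tleE. Qed.
Lemma ell3_cell3 w : ell3 T w = cell3 w.
Proof. by apply: card_triples => i j k; rewrite /tsim !tleE. Qed.

End ComputableStatistics.

Fixpoint wlist (N m : nat) : seq (seq nat) :=
  if m is m'.+1 then [seq x :: w | x <- iota 0 N, w <- wlist N m'] else [:: [::]].

Lemma mem_wlist N m w : (w \in wlist N m) = (size w == m) && all (fun x => x < N) w.
Proof.
elim: m w => [|m IH] w /=; first by case: w.
apply/allpairsP/idP => [[[x w'] [/= xN w'm ->]]|].
  by move: w'm; rewrite IH /= eqSS mem_iota in xN * => /andP [-> ->]; rewrite andbT.
case: w => [//|x w] /=; rewrite eqSS => /andP [sw /andP [xN aw]].
by exists (x, w); rewrite ?mem_iota ?IH ?sw.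
Qed.

Lemma uniq_wlist N m : uniq (wlist N m).
Proof.
elim: m => [|m IH] //=; apply: allpairs_uniq => //; first exact: iota_uniq.
by move=> [a b] [c d] _ _ /= [-> ->].
Qed.

Lemma big_tword_wlist (V : zmodType) n (P : pred (seq nat)) (F : seq nat -> V) :
  (\sum_(g : n.-tuple 'I_n.+1 | P (tword g)) F (tword g) =
   \sum_(w <- wlist n.+1 n | P w) F w)%R.
Proof.
rewrite -(big_map (@tword n) P F); apply: perm_big; apply: uniq_perm.
- by rewrite (map_inj_uniq (@tword_inj n)) index_enum_uniq.
- exact: uniq_wlist.
move=> w; rewrite mem_wlist; apply/mapP/idP => [[t _ ->]|/andP [/eqP sw aw]].
  by rewrite size_tword eqxx; apply/allP => x /mapP [y _ ->]; exact: ltn_ord.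
have sz : size (map (@inord n) w) == n by rewrite size_map sw.
exists (Tuple sz); first exact: mem_index_enum.
rewrite /tword /= -map_comp map_id_in // => x xw /=.
by rewrite inordK //; exact: (allP aw).
Qed.

Definition dim2_le (a b : nat -> nat) (i j : nat) := (a i <= a j) && (b i <= b j).

Definition dim2_topology n (a b : nat -> nat) : topology n :=
  upset_topology (fun i j : 'I_n => dim2_le a b i j).

Lemma tle_dim2_topology n a b (i j : 'I_n) : tle (dim2_topology n a b) i j = dim2_le a b i j.
Proof.
apply: tle_upset_topology => [k|k l m]; first by rewrite /dim2_le !leqnn.
by case/andP => h1 h2 /andP [h3 h4]; rewrite /dim2_le (leq_trans h1 h3) (leq_trans h2 h4).
Qed.

(* An explicit [Ordinal] rather than [inord], which is blocked by an opaque proof. *)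
Definition ones n : n.+1.-tuple 'I_n.+2 := nseq_tuple n.+1 (@Ordinal n.+2 1 isT).

Lemma packed_tuple_le_inj n (g h : n.-tuple 'I_n.+1) :
  packed (tword g) -> packed (tword h) -> tuple_le h =2 tuple_le g -> h = g.
Proof.
move=> pg ph hg; apply: eq_from_tnth => i; apply: val_inj => /=.
by rewrite (packed_rank ph) (packed_rank pg) (eq_rank hg).
Qed.

Lemma linext_word_topology n (g h : n.-tuple 'I_n.+1) : packed (tword g) ->
  is_linext (word_topology n (tword g)) (tword h) = (h == g).
Proof.
move=> pg; rewrite linext_twordE.
have hE i j : tle (word_topology n (tword g)) i j && tle (word_topology n (tword g)) j i
    = ((tnth g i : nat) == tnth g j).
  by rewrite !tle_word_topology_tword /tuple_le eqn_leq.
have hL i j : tle (word_topology n (tword g)) i j && ~~ tle (word_topology n (tword g)) j i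
    = ((tnth g i : nat) < tnth g j).
  by rewrite !tle_word_topology_tword /tuple_le -ltnNge andb_idl // => /ltnW.
apply/idP/eqP => [/and3P [ph /forallP heq /forallP hlt]|->]; last first.
  by rewrite pg /=; apply/andP; split; do 2!apply/forallP => ?; rewrite ?hE ?hL ?eqxx ?implybb.
apply: packed_tuple_le_inj => // i j; rewrite /tuple_le.
have e1 : ((tnth h i : nat) == tnth h j) = ((tnth g i : nat) == tnth g j).
  by have /forallP/(_ j)/eqP := heq i; rewrite hE.
have e2 i' j' : (tnth g i' : nat) < tnth g j' -> (tnth h i' : nat) < tnth h j'.
  by have /forallP/(_ j')/implyP := hlt i'; rewrite hL.
case: (ltngtP (tnth g i) (tnth g j)) => [lt|gt|eq].
- exact/ltnW/e2.
- by rewrite leqNgt e2.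
- by rewrite leq_eqVlt e1 eq eqxx.
Qed.

Local Open Scope ring_scope.

Lemma linear_endo_sum (K : fieldType) (phi : WQSym K -> WQSym K) : linear_endo phi ->
  forall (I : Type) (r : seq I) (P : pred I) (F : I -> WQSym K),
  phi (\sum_(i <- r | P i) F i) = \sum_(i <- r | P i) phi (F i).
Proof.
move=> hl I r P F.
have phiD x y : phi (x + y) = phi x + phi y by rewrite -[x in phi (x + _)]scale1r hl scale1r.
have phi0 : phi 0 = 0 by apply: (@addrI _ (phi 0)); rewrite -phiD !addr0.
exact: (big_morph phi phiD phi0).
Qed.

Lemma monalgU_sum (K : fieldType) (k : pword) (I : Type) (r : seq I) (P : pred I) (F : I -> K) :
  << (\sum_(i <- r | P i) F i) *g k >> = \sum_(i <- r | P i) << F i *g k >>.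
Proof. exact: (big_morph (mkmalgU k) (@monalgUD _ _ k) (@monalgU0 _ _ k)). Qed.

Section LinearMap.
Variables (K : fieldType) (q1 q2 q3 : K).

Definition gamma_coef n (T : topology n) (w : seq nat) : K :=
  if is_Tpartition T w then q1 ^+ ell1 T w * q2 ^+ ell2 T w * q3 ^+ ell3 T w else 0.

Lemma GammaE n (T : topology n) : Gamma T q1 q2 q3 =
  \sum_(t : n.-tuple 'I_n.+1) << gamma_coef T (tword t) *g to_pword (tword t) >>.
Proof.
rewrite /Gamma [LHS]big_mkcond; apply: eq_bigr => t _; rewrite /gamma_coef.
by case: (is_Tpartition T (tword t)); rewrite ?monalgU0.
Qed.

Lemma coef_Gamma n (T : topology n) (c : n.-tuple 'I_n.+1) : packed (tword c) ->
  (Gamma T q1 q2 q3)@_(to_pword (tword c)) = gamma_coef T (tword c).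
Proof.
move=> pc; rewrite GammaE raddf_sum (bigD1 c) //= mcoeffU eqxx mulr1n big1 ?addr0 //.
move=> t tc; rewrite mcoeffU /gamma_coef.
case: ifP => [/and3P [_ pt _]|_]; last by rewrite mul0rn.
case: eqP => [/(congr1 val)|]; last by rewrite mulr0n.
by rewrite /to_pword !insubdK // => /tword_inj e; rewrite e eqxx in tc.
Qed.

Definition word_image (k : pword) : WQSym K :=
  Gamma (word_topology (size (val k)) (val k)) q1 q2 q3.

Definition phi_q (x : WQSym K) : WQSym K := \sum_(k <- msupp x) x@_k *: word_image k.

Lemma phi_qE (d : {fset pword}) x : (msupp x `<=` d)%fset ->
  phi_q x = \sum_(k <- d) x@_k *: word_image k.
Proof.
move=> le; rewrite /phi_q [LHS](big_fset_incl _ le) => //= k kd /mcoeff_outdom ->.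
by rewrite scale0r.
Qed.

Lemma phi_q_linear : linear_endo phi_q.
Proof.
move=> a x y; pose d := (msupp x `|` msupp y `|` msupp (a *: x + y))%fset.
have sub z : (msupp z `<=` d)%fset -> phi_q z = \sum_(k <- d) z@_k *: word_image k.
  exact: phi_qE.
rewrite !sub; try by apply/fsubsetP => k kx; rewrite !inE kx ?orbT.
rewrite scaler_sumr -big_split /=; apply: eq_bigr => k _.
by rewrite mcoeffD mcoeffZ scalerDl scalerA.
Qed.

Lemma phi_qU n (g : n.-tuple 'I_n.+1) : packed (tword g) ->
  phi_q << to_pword (tword g) >> = Gamma (word_topology n (tword g)) q1 q2 q3.
Proof.
move=> pg; rewrite (phi_qE msuppU_le) big_seq_fset1 mcoeffUU scale1r /word_image.
rewrite /to_pword insubdK //; move: (size_tword g) => /= e.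
by rewrite {1 2}e.
Qed.

Lemma phi_q_Lmap (key : forall n, 'I_n -> nat) (key_inj : forall n, injective (key n))
    (ell : forall n, topology n -> seq nat -> nat) :
  (forall n (T : topology n) t,
     (ell n T (tword t) == 0) = no_inversion (key n) (letter t) (tle T)) ->
  (forall n (T : topology n) t,
     (ell3 T (tword t) == 0) = no_interleaving (key n) (letter t) (tle T)) ->
  (forall n (T : topology n) w,
     gamma_coef T w = (flat_partition (ell n) T w : nat)%:R) ->
  forall n (T : topology n), phi_q (Lmap T K) = Gamma T q1 q2 q3.
Proof.
move=> ell_eq0 ell3_eq0_key flatE n T; rewrite /Lmap (linear_endo_sum phi_q_linear).
under eq_bigr => g /andP [_ /andP [pg _]] do rewrite phi_qU // GammaE.
rewrite exchange_big GammaE; apply: eq_bigr => t _.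
rewrite -monalgU_sum flatE; under eq_bigr do rewrite flatE.
by rewrite -natr_sum (sum_flat_partition_linext (key_inj n)).
Qed.

End LinearMap.

Lemma phi_q_Lmap_100 (K : fieldType) n (T : topology n) :
  phi_q 1 0 0 (Lmap T K) = Gamma T 1 0 0.
Proof.
apply: (phi_q_Lmap (fun n => @ord_inj n) (ell := fun n => @ell2 n)).
- exact: ell2_eq0.
- exact: ell3_eq0.
move=> m T' w; rewrite /gamma_coef /flat_partition expr1n mul1r !expr0n.
by case: is_Tpartition; case: eqP; case: eqP; rewrite /= ?mulr1 ?mulr0 ?mul0r.
Qed.

Lemma phi_q_Lmap_010 (K : fieldType) n (T : topology n) :
  phi_q 0 1 0 (Lmap T K) = Gamma T 0 1 0.
Proof.
apply: (phi_q_Lmap (fun n => @rev_key_inj n) (ell := fun n => @ell1 n)).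
- exact: ell1_eq0.
- exact: ell3_eq0_rev.
move=> m T' w; rewrite /gamma_coef /flat_partition expr1n mulr1 !expr0n.
by case: is_Tpartition; case: eqP; case: eqP; rewrite /= ?mulr1 ?mulr0 ?mul0r.
Qed.

Section Necessity.
Variables (K : fieldType) (q1 q2 q3 : K) (phi : WQSym K -> WQSym K).
Hypothesis phi_linear : linear_endo phi.
Hypothesis phi_Lmap : forall n (T : topology n), phi (Lmap T K) = Gamma T q1 q2 q3.

Definition monomial (s : option (nat * nat * nat)) : K :=
  if s is Some (x, y, z) then q1 ^+ x * q2 ^+ y * q3 ^+ z else 0.

Lemma gamma_coef_cstat n (T : topology n) (Rn : nat -> nat -> bool) :
  (forall i j : 'I_n, tle T i j = Rn i j) ->
  forall w, gamma_coef q1 q2 q3 T w = monomial (cstat n Rn w).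
Proof.
move=> tleE w; rewrite /gamma_coef /cstat (Tpartition_ctpartition tleE).
by rewrite (ell1_cell1 tleE) (ell2_cell2 tleE) (ell3_cell3 tleE); case: ctpartition.
Qed.

Lemma phi_word n (g : n.-tuple 'I_n.+1) : packed (tword g) ->
  phi << to_pword (tword g) >> = Gamma (word_topology n (tword g)) q1 q2 q3.
Proof.
move=> pg; rewrite -phi_Lmap /Lmap (big_pred1 g) // => h.
by rewrite /= (linext_word_topology h pg).
Qed.

Lemma sum_linext_gamma_coef n (T : topology n) (c : n.-tuple 'I_n.+1) : packed (tword c) ->
  \sum_(w <- wlist n.+1 n | is_linext T w) gamma_coef q1 q2 q3 (word_topology n w) (tword c)
  = gamma_coef q1 q2 q3 T (tword c).
Proof.
move=> pc; have := congr1 (mcoeff (to_pword (tword c))) (phi_Lmap T).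
rewrite coef_Gamma // => <-.
rewrite /Lmap (linear_endo_sum phi_linear) raddf_sum -big_tword_wlist.
apply: eq_bigr => g /and3P [_ pg _].
by rewrite phi_word //= coef_Gamma.
Qed.

Lemma linext_monomials n (T : topology n) (Rn : nat -> nat -> bool) (c : n.-tuple 'I_n.+1) ms m :
  (forall i j : 'I_n, tle T i j = Rn i j) -> cpacked (tword c) ->
  [seq cstat n (fun i j => nth 0 w i <= nth 0 w j)%N (tword c)
     | w <- wlist n.+1 n & clinext n Rn w] = ms ->
  cstat n Rn (tword c) = m ->
  \sum_(s <- ms) monomial s = monomial m.
Proof.
move=> tleE pc <- <-; rewrite -packed_cpacked in pc.
rewrite big_map big_filter -(gamma_coef_cstat tleE) -(sum_linext_gamma_coef T pc).
rewrite [RHS]big_mkcond [LHS]big_mkcond; apply: eq_bigr => w _.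
rewrite (linext_clinext tleE); case: ifP => // _.
by rewrite (@gamma_coef_cstat n _ (fun i j => nth 0 w i <= nth 0 w j)%N (@tle_word_topology n w)).
Qed.

Lemma antichain2_identity : q1 + q2 = 1.
Proof.
have := linext_monomials
  (c := ones 1) (ms := [:: Some (1, 0, 0); Some (0, 1, 0)]) (m := Some (0, 0, 0))
  (@tle_dim2_topology 2 id (subn 1)) isT erefl erefl.
by rewrite !big_cons big_nil /= !expr0 !expr1 !mulr1 !mul1r addr0 => ->.
Qed.

Lemma chain_point_identity : q1 ^+ 3 + q1 ^+ 2 * q2 + q1 * q2 ^+ 2 = q1.
Proof.
have := linext_monomials
  (c := ones 2) (ms := [:: Some (3, 0, 0); Some (2, 1, 0); Some (1, 2, 0)]) (m := Some (1, 0, 0))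
  (@tle_dim2_topology 3 id (fun i => if i == 2 then 0 else i.+1)%N) isT erefl erefl.
by rewrite !big_cons big_nil /= !expr0 !expr1 !mulr1 addr0 !addrA => ->.
Qed.

Lemma class_point_identity : q1 * q2 * q3 + q1 * q2 * q3 = q3.
Proof.
have := linext_monomials
  (c := ones 2) (ms := [:: Some (1, 1, 1); Some (1, 1, 1)]) (m := Some (0, 0, 1))
  (@tle_dim2_topology 3 (fun i => i == 1) (fun i => i != 1)%N) isT erefl erefl.
by rewrite !big_cons big_nil /= !expr0 !expr1 !mul1r addr0 => ->.
Qed.

End Necessity.

Lemma weights_solutions (K : fieldType) (q1 q2 q3 : K) :
  q1 + q2 = 1 -> q1 ^+ 3 + q1 ^+ 2 * q2 + q1 * q2 ^+ 2 = q1 ->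
  q1 * q2 * q3 + q1 * q2 * q3 = q3 ->
  (q1, q2, q3) = (1, 0, 0) \/ (q1, q2, q3) = (0, 1, 0).
Proof.
move=> e1; have -> : q2 = 1 - q1 by rewrite -e1 addrC addKr.
move=> e2 e3.
have : q1 ^+ 2 * (q1 - 1) = q1 ^+ 3 + q1 ^+ 2 * (1 - q1) + q1 * (1 - q1) ^+ 2 - q1.
  by ring.
rewrite e2 subrr => /eqP; rewrite mulf_eq0 expf_eq0 subr_eq0 /= => /orP [] /eqP q1E.
  by right; rewrite -e3 q1E !mul0r addr0 subr0.
by left; rewrite -e3 q1E subrr mulr0 !mul0r addr0.
Qed.

Theorem proposition21 (K : fieldType) (q1 q2 q3 : K) :
  (exists phi : WQSym K -> WQSym K,
      linear_endo phi /\
      forall (n : nat) (T : topology n), phi (Lmap T K) = Gamma T q1 q2 q3)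
  <-> ((q1, q2, q3) = (1, 0, 0) \/ (q1, q2, q3) = (0, 1, 0)).
Proof.
split=> [[phi [phi_linear phi_Lmap]]|].
  apply: weights_solutions.
  - exact: antichain2_identity phi_linear phi_Lmap.
  - exact: chain_point_identity phi_linear phi_Lmap.
  - exact: class_point_identity phi_linear phi_Lmap.
case=> [[-> -> ->]|[-> -> ->]].
  by exists (phi_q 1 0 0); split; [exact: phi_q_linear | exact: phi_q_Lmap_100].
by exists (phi_q 0 1 0); split; [exact: phi_q_linear | exact: phi_q_Lmap_010].
Qed.
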